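(* Let $\mathcal{G}$ be an undirected graph on $n$ nodes with symmetric nonnegative adjacency matrix $A=(a_{ij})\in\mathbb{R}^{n\times n}$ and degree matrix $D=\mathrm{diag}(d_1,\dots,d_n)$. Let $L_s=I-D^{-1/2}AD^{-1/2}$ be the symmetrically normalized graph Laplacian, with eigendecomposition $L_s=U\Lambda U^{-1}$, where $\Lambda=\mathrm{diag}(\lambda_1,\dots,\lambda_n)$ and $U=[\bm u_1,\dots,\bm u_n]$ is orthogonal. Let $p$ be a real function and $G=U\,\mathrm{diag}(p(\lambda_1),\dots,p(\lambda_n))\,U^{-1}$. If $p$ is nonincreasing and nonnegative on the set of eigenvalues $\{\lambda_1,\dots,\lambda_n\}$, then for any signal $\bm f\in\mathbb{R}^n$ with filtered signal $\bar{\bm f}=G\bm f$ (both nonzero), we have $$\Omega\!\left(\frac{\bar{\bm f}}{\|\bar{\bm f}\|_2}\right)\le \Omega\!\left(\frac{\bm f}{\|\bm f\|_2}\right),$$ where for $\bm g\in\mathbb{R}^n$, $\Omega(\bm g)=\frac12\sum_{(v_i,v_j)\in\mathcal{E}} a_{ij}\left\|\frac{\bm g(i)}{\sqrt{d_i}}-\frac{\bm g(j)}{\sqrt{d_j}}\right\|_2^2=\bm g^\top L_s\bm g$.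
   Context: A graph signal is a vector $\bm f\in\mathbb{R}^n$ assigning a real value to each node. A graph filter with frequency response function $p$ is the matrix $G=Up(\Lambda)U^{-1}$. $\Omega$ is the smoothness measure (Laplacian–Beltrami operator) given in the claim; $\mathcal{E}$ is the edge set. The eigenvalues of $L_s$ lie in $[0,2]$. *)

From HB Require Import structures.
From mathcomp Require Import all_boot all_order all_algebra.
Set Implicit Arguments. Unset Strict Implicit. Unset Printing Implicit Defensive.
Import Order.TTheory GRing.Theory Num.Theory.
Local Open Scope ring_scope.

Definition degree (R : rcfType) (n : nat) (A : 'M[R]_n) (i : 'I_n) : R :=
  \sum_(j < n) A i j.

Definition Dmhalf (R : rcfType) (n : nat) (A : 'M[R]_n) : 'M[R]_n :=
  diag_mx (\row_i (Num.sqrt (degree A i))^-1).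

Definition Lsym (R : rcfType) (n : nat) (A : 'M[R]_n) : 'M[R]_n :=
  1%:M - Dmhalf A *m A *m Dmhalf A.

Definition norm2 (R : rcfType) (n : nat) (f : 'cV[R]_n) : R :=
  Num.sqrt (\sum_(i < n) f i 0 ^+ 2).

(* edge set: (v_i, v_j) is an edge iff a_ij <> 0 (ordered pairs, each
   undirected edge appearing in both orientations, hence the factor 1/2) *)
Definition is_edge (R : rcfType) (n : nat) (A : 'M[R]_n) (i j : 'I_n) : bool :=
  A i j != 0.

Definition Omega (R : rcfType) (n : nat) (A : 'M[R]_n) (g : 'cV[R]_n) : R :=
  2^-1 * \sum_(i < n) \sum_(j < n | is_edge A i j)
     A i j * (g i 0 / Num.sqrt (degree A i) - g j 0 / Num.sqrt (degree A j)) ^+ 2.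

From HB Require Import structures.
From mathcomp Require Import all_boot all_order all_algebra.
From mathcomp Require Import ring.
Import Order.TTheory GRing.Theory Num.Theory.
Set Implicit Arguments. Unset Strict Implicit.
Local Open Scope ring_scope.

(* Omega(g / |g|) is the Rayleigh quotient g^T L_s g / g^T g of L_s, because
   L_s = D^-1/2 (D - A) D^-1/2 and the quadratic form of the combinatorial
   Laplacian D - A is half the weighted sum of squared differences.  In the
   eigenbasis c = U^T f the Rayleigh quotients of f and of G f are the weighted
   means of the eigenvalues lam_i with weights c_i^2 and p(lam_i)^2 c_i^2.
   Since p(lam)^2 is ordered opposite to lam, Chebyshev's sum inequality shows
   that this reweighting can only lower the mean. *)

Section QuadraticForm.
Variable R : comPzRingType.

Definition qform n (M : 'M[R]_n) (g : 'cV[R]_n) : R := (g^T *m M *m g) 0 0.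

Lemma qformE n (M : 'M[R]_n) g : qform M g = \sum_i \sum_j g i 0 * M i j * g j 0.
Proof.
rewrite /qform mxE exchange_big; apply: eq_bigr => i _ /=.
by rewrite mxE big_distrl; apply: eq_bigr => j _; rewrite !mxE.
Qed.

Lemma qformZ n (M : 'M[R]_n) k g : qform M (k *: g) = k ^+ 2 * qform M g.
Proof.
rewrite !qformE mulr_sumr; apply: eq_bigr => i _; rewrite mulr_sumr.
by apply: eq_bigr => j _; rewrite !mxE; ring.
Qed.

Lemma qform_mulmx n (M P : 'M[R]_n) g : qform M (P *m g) = qform (P^T *m M *m P) g.
Proof. by rewrite /qform trmx_mul !mulmxA. Qed.

Lemma qform_diag n (d : 'rV[R]_n) g : qform (diag_mx d) g = \sum_i d 0 i * g i 0 ^+ 2.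
Proof.
rewrite /qform mul_mx_diag mxE; apply: eq_bigr => i _; rewrite !mxE; ring.
Qed.

Lemma qform1 n (g : 'cV[R]_n) : qform 1%:M g = \sum_i g i 0 ^+ 2.
Proof.
by rewrite -diag_const_mx qform_diag; apply: eq_bigr => i _; rewrite mxE mul1r.
Qed.

Definition laplacian n (A : 'M[R]_n) : 'M[R]_n := diag_mx (\row_i \sum_j A i j) - A.

Lemma laplacian_qform n (A : 'M[R]_n) (h : 'cV[R]_n) : A^T = A ->
  \sum_i \sum_j A i j * (h i 0 - h j 0) ^+ 2 = 2 * qform (laplacian A) h.
Proof.
move=> A_sym; pose F i j := A i j * h i 0 ^+ 2 - h i 0 * A i j * h j 0.
have A_symE i j : A j i = A i j by rewrite -[in LHS]A_sym mxE.
have -> : \sum_i \sum_j A i j * (h i 0 - h j 0) ^+ 2 =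
          \sum_i \sum_j (F i j + F j i).
  by apply: eq_bigr => i _; apply: eq_bigr => j _; rewrite /F A_symE; ring.
have sumF : \sum_i \sum_j F i j = qform (laplacian A) h.
  rewrite /laplacian qformE; apply: eq_bigr => i _.
  under [RHS]eq_bigr => j _ do rewrite !mxE mulrBr mulrBl.
  rewrite /F !sumrB -mulr_suml; congr (_ - _).
  rewrite [RHS](bigD1 i) //= [X in _ + X]big1 ?addr0 => [|j /negbTE ji].
    by rewrite eqxx mulr1n; ring.
  by rewrite eq_sym ji mulr0n mulr0 mul0r.
rewrite (eq_bigr _ (fun i _ => big_split _ _ _ _ _)) big_split /=.
by rewrite [X in _ + X]exchange_big /= sumF; ring.
Qed.

End QuadraticForm.

Section RayleighQuotient.
Variable R : fieldType.

Definition rayleigh n (M : 'M[R]_n) (g : 'cV[R]_n) : R := qform M g / qform 1%:M g.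

Lemma invmx_orthogonal n (U : 'M[R]_n) : U^T *m U = 1%:M -> invmx U = U^T.
Proof.
by move=> UU; have [_ Uu] := mulmx1_unit UU; rewrite -[U^T](mulmxK Uu) UU mul1mx.
Qed.

Lemma rayleigh_orthogonal_conj n (U M : 'M[R]_n) v : U^T *m U = 1%:M ->
  rayleigh (U *m M *m U^T) (U *m v) = rayleigh M v.
Proof.
move=> UU; rewrite /rayleigh !qform_mulmx mulmx1 UU.
by rewrite !mulmxA UU mul1mx -mulmxA UU mulmx1.
Qed.

End RayleighQuotient.

Section RealField.
Variable R : realFieldType.

Lemma chebyshev_sum_le n (l b w : 'I_n -> R) :
  (forall i, 0 <= w i) -> (forall i j, (l i - l j) * (b i - b j) <= 0) ->
  (\sum_i l i * b i * w i) * (\sum_i w i) <= (\sum_i l i * w i) * (\sum_i b i * w i).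
Proof.
move=> w_ge0 opposite; rewrite -subr_ge0 -(pmulr_rge0 _ (ltr0Sn _ 1)).
(* Symmetrising the double sum of F gives sum (l i - l j) (b i - b j) w i w j. *)
pose F i j := l i * b i * w i * w j - l i * w i * (b j * w j).
have sumF : \sum_i \sum_j F i j =
    (\sum_i l i * b i * w i) * (\sum_i w i) - (\sum_i l i * w i) * (\sum_i b i * w i).
  rewrite !mulr_suml -sumrB; apply: eq_bigr => i _.
  by rewrite !mulr_sumr -sumrB.
have symF : \sum_i \sum_j (F i j + F j i) = 2 * \sum_i \sum_j F i j.
  rewrite (eq_bigr _ (fun i _ => big_split _ _ _ _ _)) big_split /=.
  by rewrite [X in _ + X]exchange_big /= -mulr2n mulr_natl.
rewrite -opprB -sumF mulrN -symF oppr_ge0 sumr_le0 // => i _; rewrite sumr_le0 // => j _.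
have -> : F i j + F j i = (l i - l j) * (b i - b j) * (w i * w j) by rewrite /F; ring.
by rewrite mulr_le0_ge0 ?mulr_ge0.
Qed.

Lemma qform1_gt0 n (g : 'cV[R]_n) : g != 0 -> 0 < qform 1%:M g.
Proof.
move=> g_neq0; rewrite qform1 lt_def sumr_ge0 ?andbT => [|i _]; last exact: sqr_ge0.
apply: contra g_neq0 => /eqP/(psumr_eq0P (fun i _ => sqr_ge0 (g i 0))) g0.
by apply/eqP/matrixP => i j; rewrite ord1 mxE; apply/eqP; rewrite -sqrf_eq0 g0.
Qed.

Lemma rayleigh_diag_filter_le n (lam q : 'rV[R]_n) (v : 'cV[R]_n) :
  (forall i j, lam 0 i <= lam 0 j -> q 0 j <= q 0 i) -> (forall i, 0 <= q 0 i) ->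
  diag_mx q *m v != 0 ->
  rayleigh (diag_mx lam) (diag_mx q *m v) <= rayleigh (diag_mx lam) v.
Proof.
move=> q_anti q_ge0 qv_neq0.
have v_neq0 : v != 0 by apply: contraNneq qv_neq0 => ->; rewrite mulmx0.
rewrite /rayleigh ler_pdivrMr ?qform1_gt0 // mulrAC ler_pdivlMr ?qform1_gt0 //.
rewrite !qform_diag !qform1.
under eq_bigr => i _ do rewrite mul_diag_mx mxE exprMn mulrA.
under [X in _ <= _ * X]eq_bigr => i _ do rewrite mul_diag_mx mxE exprMn.
apply: (chebyshev_sum_le (l := fun i => lam 0 i) (b := fun i => q 0 i ^+ 2)).
  by move=> i; exact: sqr_ge0.
move=> i j /=; have [lam_ij|lam_ji] := lerP (lam 0 i) (lam 0 j).
  rewrite mulr_le0_ge0 ?subr_le0 // subr_ge0.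
  by rewrite ler_sqr ?nnegrE ?q_ge0 ?q_anti.
rewrite mulr_ge0_le0 ?subr_ge0 ?(ltW lam_ji) // subr_le0.
by rewrite ler_sqr ?nnegrE ?q_ge0 ?q_anti ?ltW.
Qed.

End RealField.

Section NormalizedLaplacian.
Variables (R : rcfType) (n : nat) (A : 'M[R]_n).
Hypothesis degree_gt0 : forall i, 0 < degree A i.

Lemma Lsym_laplacian : Lsym A = Dmhalf A *m laplacian A *m Dmhalf A.
Proof.
rewrite /Lsym /laplacian mulmxBr mulmxBl; congr (_ - _).
apply/matrixP => i j; rewrite /Dmhalf mul_mx_diag mul_diag_mx !mxE.
have [<-|ij] := eqVneq i; last by rewrite mulr0n mulr0 mul0r.
have sqrt_neq0 : Num.sqrt (degree A i) != 0 by rewrite sqrtr_eq0 -ltNge.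
rewrite -[X in _ * (X *+ _) * _](@sqr_sqrtr _ (degree A i)) ?ltW //.
by rewrite mulr1n mulrA mulVf // mul1r mulfV.
Qed.

Hypothesis A_sym : A^T = A.

Lemma Omega_qform g : Omega A g = qform (Lsym A) g.
Proof.
rewrite Lsym_laplacian -[X in X *m _ *m _]tr_diag_mx -qform_mulmx.
apply: (@mulfI _ 2); first by rewrite pnatr_eq0.
rewrite -laplacian_qform // /Omega mulrA divff ?pnatr_eq0 // mul1r.
apply: eq_bigr => i _; rewrite big_mkcond /=; apply: eq_bigr => j _.
rewrite /is_edge !mul_diag_mx !mxE ![_^-1 * _]mulrC.
by case: eqP => [->|]; rewrite ?mul0r.
Qed.

Lemma Omega_normalized g : Omega A ((norm2 g)^-1 *: g) = rayleigh (Lsym A) g.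
Proof.
rewrite Omega_qform qformZ exprVn /norm2 sqr_sqrtr ?sumr_ge0 // => [|i _].
  by rewrite -qform1 mulrC.
exact: sqr_ge0.
Qed.

End NormalizedLaplacian.

Theorem theorem1 (R : rcfType) (n : nat) (A : 'M[R]_n)
    (U : 'M[R]_n) (lam : 'rV[R]_n) (p : R -> R) (f : 'cV[R]_n) :
  A^T = A ->
  (forall i j, 0 <= A i j) ->
  (forall i, 0 < degree A i) ->
  U^T *m U = 1%:M ->
  Lsym A = U *m diag_mx lam *m invmx U ->
  (forall i j, lam 0 i <= lam 0 j -> p (lam 0 j) <= p (lam 0 i)) ->
  (forall i, 0 <= p (lam 0 i)) ->
  let G := U *m diag_mx (map_mx p lam) *m invmx U in
  let fbar := G *m f in
  f != 0 -> fbar != 0 ->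
  Omega A ((norm2 fbar)^-1 *: fbar) <= Omega A ((norm2 f)^-1 *: f).
Proof.
(* The sign of A is irrelevant, and f != 0 already follows from fbar != 0. *)
move=> A_sym _ degree_gt0 UU L_eig p_anti p_ge0 G fbar _ fbar_neq0.
have invU : invmx U = U^T := invmx_orthogonal UU.
pose c := U^T *m f.
have fE : f = U *m c by rewrite /c mulmxA (mulmx1C UU) mul1mx.
have fbarE : fbar = U *m (diag_mx (map_mx p lam) *m c).
  by rewrite /fbar /G invU -!mulmxA.
rewrite !Omega_normalized // L_eig invU fbarE [in X in _ <= X]fE.
rewrite !rayleigh_orthogonal_conj //; apply: rayleigh_diag_filter_le.
- by move=> i j /p_anti; rewrite !mxE.
- by move=> i; rewrite mxE.
- by apply: contraNneq fbar_neq0; rewrite fbarE => ->; rewrite mulmx0.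
Qed.
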